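(* Let $\beta>0$ and $\alpha\in(-1,1)$. Define $\rho_\alpha$ on $\{\pm1\}^2$ by $\rho_\alpha(s,t)=\frac{1+\alpha}{4}$ if $s=t$ and $\rho_\alpha(s,t)=\frac{1-\alpha}{4}$ if $s\ne t$. For a probability distribution $\mu$ on $\{\pm1\}^4$ (with coordinates $(\sigma_1,\tau_1,\sigma_2,\tau_2)$) let \[ g(\mu,\rho_\alpha)=D_{\mathrm{KL}}(\mu\,\|\,\rho_\alpha\otimes\rho_\alpha)+\beta\sum_{x\in A_1}\mu(x)+2\beta\sum_{x\in A_2}\mu(x), \] where $A_1=\{x:\sigma_1=\sigma_2,\tau_1\neq\tau_2\}\cup\{x:\sigma_1\neq\sigma_2,\tau_1=\tau_2\}$, $A_2=\{x:\sigma_1=\sigma_2,\tau_1=\tau_2\}$, and $(\rho_\alpha\otimes\rho_\alpha)(\sigma_1,\tau_1,\sigma_2,\tau_2)=\rho_\alpha(\sigma_1,\tau_1)\rho_\alpha(\sigma_2,\tau_2)$. Let $\mu^*$ be the minimizer of $g(\cdot,\rho_\alpha)$ over all probability distributions $\mu$ on $\{\pm1\}^4$ satisfying $\sum_{(\sigma_2,\tau_2)}\mu(\sigma_1,\tau_1,\sigma_2,\tau_2)=\rho_\alpha(\sigma_1,\tau_1)$ for all $(\sigma_1,\tau_1)$ and $\sum_{(\sigma_1,\tau_1)}\mu(\sigma_1,\tau_1,\sigma_2,\tau_2)=\rho_\alpha(\sigma_2,\tau_2)$ for all $(\sigma_2,\tau_2)$. Then, with $z=\sqrt{(1+e^{-2\beta})^2-\alpha^2(1-e^{-2\beta})^2}$,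 \begin{align*} g(\mu^*,\rho_\alpha)&=2\log2-\log\big((1+e^{-2\beta})(1-e^{-2\beta})^2\big)-(1+\alpha)\log(1+\alpha)-(1-\alpha)\log(1-\alpha)\\ &\quad+\frac{1+\alpha}{2}\log\Big((1+e^{-2\beta})^2+\alpha(1-e^{-2\beta})^2-2e^{-\beta}z\Big)+\frac{1-\alpha}{2}\log\Big((1+e^{-2\beta})^2-\alpha(1-e^{-2\beta})^2-2e^{-\beta}z\Big). \end{align*}
   Context: $D_{\mathrm{KL}}(\mu\|\nu)=\sum_\omega\mu(\omega)\log\frac{\mu(\omega)}{\nu(\omega)}$ with the convention $0\log 0=0$. *)

(* R : realType, ln = natural log (ln x = 0 for x <= 0). *)
From mathcomp Require Import all_boot all_order all_algebra.
From mathcomp Require Import all_classical all_reals all_analysis.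
Set Implicit Arguments. Unset Strict Implicit. Unset Printing Implicit Defensive.
Import Order.TTheory GRing.Theory Num.Theory.
Local Open Scope ring_scope.

(* Spins {+1,-1} are encoded by bool (true = +1, false = -1); only equality of
   spins matters below. *)

Definition rho {R : realType} (alpha : R) (s t : bool) : R :=
  if s == t then (1 + alpha) / 4 else (1 - alpha) / 4.

Definition dist4 (R : realType) := bool -> bool -> bool -> bool -> R.

Definition is_prob4 {R : realType} (mu : dist4 R) : Prop :=
  (forall s1 t1 s2 t2, 0 <= mu s1 t1 s2 t2) /\
  \sum_(s1 : bool) \sum_(t1 : bool) \sum_(s2 : bool) \sum_(t2 : bool)
     mu s1 t1 s2 t2 = 1.

Definition rho2 {R : realType} (alpha : R) : dist4 R :=
  fun s1 t1 s2 t2 => rho alpha s1 t1 * rho alpha s2 t2.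

Definition KL4 {R : realType} (mu nu : dist4 R) : R :=
  \sum_(s1 : bool) \sum_(t1 : bool) \sum_(s2 : bool) \sum_(t2 : bool)
     (if mu s1 t1 s2 t2 == 0 then 0
      else mu s1 t1 s2 t2 * ln (mu s1 t1 s2 t2 / nu s1 t1 s2 t2)).

Definition inA1 (s1 t1 s2 t2 : bool) : bool :=
  ((s1 == s2) && (t1 != t2)) || ((s1 != s2) && (t1 == t2)).
Definition inA2 (s1 t1 s2 t2 : bool) : bool := (s1 == s2) && (t1 == t2).

Definition gfun {R : realType} (beta alpha : R) (mu : dist4 R) : R :=
  KL4 mu (rho2 alpha)
  + beta * (\sum_(s1 : bool) \sum_(t1 : bool) \sum_(s2 : bool) \sum_(t2 : bool)
              (if inA1 s1 t1 s2 t2 then mu s1 t1 s2 t2 else 0))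
  + 2 * beta * (\sum_(s1 : bool) \sum_(t1 : bool) \sum_(s2 : bool) \sum_(t2 : bool)
              (if inA2 s1 t1 s2 t2 then mu s1 t1 s2 t2 else 0)).

Definition coupling {R : realType} (alpha : R) (mu : dist4 R) : Prop :=
  is_prob4 mu /\
  (forall s1 t1, \sum_(s2 : bool) \sum_(t2 : bool) mu s1 t1 s2 t2 = rho alpha s1 t1) /\
  (forall s2 t2, \sum_(s1 : bool) \sum_(t1 : bool) mu s1 t1 s2 t2 = rho alpha s2 t2).

Definition gvalue {R : realType} (beta alpha : R) : R :=
  let q := expR (- (2 * beta)) in
  let z := Num.sqrt ((1 + q) ^+ 2 - alpha ^+ 2 * (1 - q) ^+ 2) in
  2 * ln 2 - ln ((1 + q) * (1 - q) ^+ 2)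
  - (1 + alpha) * ln (1 + alpha) - (1 - alpha) * ln (1 - alpha)
  + (1 + alpha) / 2 * ln ((1 + q) ^+ 2 + alpha * (1 - q) ^+ 2 - 2 * expR (- beta) * z)
  + (1 - alpha) / 2 * ln ((1 + q) ^+ 2 - alpha * (1 - q) ^+ 2 - 2 * expR (- beta) * z).

(* The minimiser is the Schroedinger-bridge coupling
     mu0(s1,t1,s2,t2) = f(s1,t1) f(s2,t2) exp(-beta ([s1 = s2] + [t1 = t2])),
   since the cost beta 1_A1 + 2 beta 1_A2 is beta times the number of agreeing
   coordinates.  With f = p on aligned and f = q on anti-aligned pairs, the
   marginal constraints read p^2 u + p q v = (1 + alpha)/4 and
   q^2 u + p q v = (1 - alpha)/4 with u = 1 + e^(-2 beta), v = 2 e^(-beta),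
   a system solved by square roots (note u^2 = v^2 + w^2, w = 1 - e^(-2 beta)).
   For h = log (f / rho_alpha) and every coupling mu,
     g(mu) = KL(mu || mu0) + sum mu (h(s1,t1) + h(s2,t2)),
   and the last sum only depends on the marginals of mu.  Hence
   g(mu) - g(mu0) = KL(mu || mu0) >= 0, and g(mu0) = 2 sum rho_alpha h. *)

From mathcomp Require Import all_boot all_order all_algebra.
From mathcomp Require Import all_classical all_reals all_analysis.
From mathcomp Require Import ring lra.
Import Order.TTheory GRing.Theory Num.Theory.
Set Implicit Arguments. Unset Strict Implicit. Unset Printing Implicit Defensive.
Local Open Scope ring_scope.

Section CouplingWeights.
Variables (R : rcfType) (u v w a : R).
Hypotheses (u_gt0 : 0 < u) (v_gt0 : 0 < v) (w_gt0 : 0 < w)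
  (pythag : u ^+ 2 = v ^+ 2 + w ^+ 2) (a_gtN1 : -1 < a) (a_lt1 : a < 1).

(* [lra] and [nra] ignore section hypotheses, hence the [move:]s below. *)

Definition disc : R := Num.sqrt (u ^+ 2 - a ^+ 2 * w ^+ 2).
Definition Xp : R := u ^+ 2 + a * w ^+ 2 - v * disc.
Definition Xm : R := u ^+ 2 - a * w ^+ 2 - v * disc.
Definition aligned_weight : R := Num.sqrt (Xp / (4 * u * w ^+ 2)).
Definition antialigned_weight : R := Num.sqrt (Xm / (4 * u * w ^+ 2)).

Let sqr_a_w_lt : a ^+ 2 * w ^+ 2 < w ^+ 2.
Proof. by rewrite -[ltRHS]mul1r ltr_pM2r ?exprn_gt0 //; move: a_gtN1 a_lt1; nra. Qed.

Lemma disc_sqr : disc ^+ 2 = u ^+ 2 - a ^+ 2 * w ^+ 2.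
Proof. by rewrite sqr_sqrtr //; move: sqr_a_w_lt pythag (sqr_ge0 v); lra. Qed.

Lemma disc_gt_v : v < disc.
Proof.
have : v ^+ 2 < disc ^+ 2.
  by rewrite disc_sqr; move: sqr_a_w_lt pythag; lra.
by move: v_gt0 (sqrtr_ge0 (u ^+ 2 - a ^+ 2 * w ^+ 2)); rewrite -/disc; nra.
Qed.

Lemma disc_le_u : disc <= u.
Proof.
have : disc ^+ 2 <= u ^+ 2 by rewrite disc_sqr; move: (mulr_ge0 (sqr_ge0 a) (sqr_ge0 w)); lra.
by move: u_gt0 (sqrtr_ge0 (u ^+ 2 - a ^+ 2 * w ^+ 2)); rewrite -/disc; nra.
Qed.

Lemma mul_XpXm : Xp * Xm = (u * (disc - v)) ^+ 2.
Proof.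
apply/eqP; rewrite -subr_eq0 /Xp /Xm.
have -> : (u ^+ 2 + a * w ^+ 2 - v * disc) * (u ^+ 2 - a * w ^+ 2 - v * disc)
    - (u * (disc - v)) ^+ 2
  = (v ^+ 2 - u ^+ 2) * (disc ^+ 2 - (u ^+ 2 - a ^+ 2 * w ^+ 2))
    + a ^+ 2 * w ^+ 2 * (u ^+ 2 - v ^+ 2 - w ^+ 2) by ring.
have uvw0 : u ^+ 2 - v ^+ 2 - w ^+ 2 = 0 by rewrite pythag; ring.
by rewrite disc_sqr uvw0 subrr !mulr0 addr0.
Qed.

Let Xp_add_Xm_gt0 : 0 < Xp + Xm.
Proof.
have : v * disc <= v * u by rewrite ler_wpM2l ?disc_le_u // ltW.
have : v * u < u * u by rewrite ltr_pM2r // (lt_le_trans disc_gt_v disc_le_u).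
rewrite /Xp /Xm expr2; lra.
Qed.

Let XpXm_gt0 : 0 < Xp * Xm.
Proof. by rewrite mul_XpXm exprn_gt0 // mulr_gt0 // subr_gt0 disc_gt_v. Qed.

Lemma Xp_gt0 : 0 < Xp.
Proof. by move: Xp_add_Xm_gt0 XpXm_gt0; nra. Qed.

Lemma Xm_gt0 : 0 < Xm.
Proof. by move: Xp_add_Xm_gt0 XpXm_gt0; nra. Qed.

Let denom_gt0 : 0 < 4 * u * w ^+ 2.
Proof. by rewrite !mulr_gt0 ?exprn_gt0. Qed.

Lemma pw_gt0 : 0 < aligned_weight.
Proof. by rewrite sqrtr_gt0 divr_gt0 ?Xp_gt0. Qed.

Lemma qw_gt0 : 0 < antialigned_weight.
Proof. by rewrite sqrtr_gt0 divr_gt0 ?Xm_gt0. Qed.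

Lemma pw_sqr : aligned_weight ^+ 2 = Xp / (4 * u * w ^+ 2).
Proof. by rewrite sqr_sqrtr // divr_ge0 // ltW // Xp_gt0. Qed.

Lemma qw_sqr : antialigned_weight ^+ 2 = Xm / (4 * u * w ^+ 2).
Proof. by rewrite sqr_sqrtr // divr_ge0 // ltW // Xm_gt0. Qed.

Lemma pw_qw : aligned_weight * antialigned_weight = (disc - v) / (4 * w ^+ 2).
Proof.
have rhs_gt0 : 0 < (disc - v) / (4 * w ^+ 2).
  by rewrite divr_gt0 ?subr_gt0 ?disc_gt_v // mulr_gt0 ?exprn_gt0.
apply/eqP; rewrite -(@eqrXn2 _ 2) ?ltW ?(mulr_gt0 pw_gt0 qw_gt0) //.
rewrite exprMn pw_sqr qw_sqr mulrACA -invfM mul_XpXm; apply/eqP.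
by field; rewrite (gt_eqF w_gt0) (gt_eqF u_gt0).
Qed.

Lemma pw_marginal : aligned_weight ^+ 2 * u + aligned_weight * antialigned_weight * v = (1 + a) / 4.
Proof.
rewrite pw_sqr pw_qw /Xp pythag.
by field; rewrite (gt_eqF w_gt0) (gt_eqF u_gt0).
Qed.

Lemma qw_marginal : antialigned_weight ^+ 2 * u + aligned_weight * antialigned_weight * v = (1 - a) / 4.
Proof.
rewrite qw_sqr pw_qw /Xm pythag.
by field; rewrite (gt_eqF w_gt0) (gt_eqF u_gt0).
Qed.

End CouplingWeights.

Lemma ln_le_subr1 {R : realType} (x : R) : 0 < x -> ln x <= x - 1.
Proof. by move=> x_gt0; rewrite lerBrDl -[leRHS](lnK x_gt0) expR_ge1Dx. Qed.

Definition klterm {R : realType} (x y : R) : R :=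
  if x == 0 then 0 else x * ln (x / y).

Lemma klterm_ge_subr {R : realType} (x y : R) :
  0 <= x -> 0 < y -> x - y <= klterm x y.
Proof.
move=> x_ge0 y_gt0; rewrite /klterm; case: eqP => [->|/eqP x_neq0]; first lra.
have x_gt0 : 0 < x by rewrite lt0r x_neq0.
have : x * ln (y / x) <= x * (y / x - 1).
  by apply: ler_wpM2l; [exact: ltW | exact/ln_le_subr1/divr_gt0].
have -> : ln (y / x) = - ln (x / y) by rewrite -lnV ?posrE ?divr_gt0 // invf_div.
have -> : x * (y / x - 1) = y - x by field; rewrite gt_eqF.
lra.
Qed.

Lemma kltermxx {R : realType} (x : R) : klterm x x = 0.
Proof. by rewrite /klterm; case: eqP => // /eqP x_neq0; rewrite divff // ln1 mulr0. Qed.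

Lemma klterm_change_ref {R : realType} (x y z : R) : 0 <= x -> 0 < y -> 0 < z ->
  klterm x y = klterm x z + x * ln (z / y).
Proof.
move=> x_ge0 y_gt0 z_gt0; rewrite /klterm.
case: eqP => [->|/eqP x_neq0]; first by rewrite mul0r addr0.
have x_gt0 : 0 < x by rewrite lt0r x_neq0.
rewrite -mulrDr -lnM ?posrE ?divr_gt0 // mulrA divfK ?gt_eqF //.
Qed.

Definition sum4 {R : realType} (F : dist4 R) : R :=
  \sum_(s1 : bool) \sum_(t1 : bool) \sum_(s2 : bool) \sum_(t2 : bool) F s1 t1 s2 t2.

Section SumsOverSpins.
Variable R : realType.

Lemma sum4D (F G : dist4 R) :
  sum4 (fun s1 t1 s2 t2 => F s1 t1 s2 t2 + G s1 t1 s2 t2) = sum4 F + sum4 G.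
Proof. by rewrite /sum4 !big_bool /=; ring. Qed.

Lemma sum4B (F G : dist4 R) :
  sum4 (fun s1 t1 s2 t2 => F s1 t1 s2 t2 - G s1 t1 s2 t2) = sum4 F - sum4 G.
Proof. by rewrite /sum4 !big_bool /=; ring. Qed.

Lemma eq_sum4 (F G : dist4 R) :
  (forall s1 t1 s2 t2, F s1 t1 s2 t2 = G s1 t1 s2 t2) -> sum4 F = sum4 G.
Proof. by move=> FG; do 4!(apply: eq_bigr => ? _); apply: FG. Qed.

Lemma ler_sum4 (F G : dist4 R) :
  (forall s1 t1 s2 t2, F s1 t1 s2 t2 <= G s1 t1 s2 t2) -> sum4 F <= sum4 G.
Proof. by move=> FG; do 4!(apply: ler_sum => ? _); apply: FG. Qed.

Lemma KL4_ge0 (mu nu : dist4 R) : is_prob4 mu -> is_prob4 nu ->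
  (forall s1 t1 s2 t2, 0 < nu s1 t1 s2 t2) -> 0 <= KL4 mu nu.
Proof.
move=> [mu_ge0 mu1] [_ nu1] nu_gt0.
have : sum4 (fun s1 t1 s2 t2 => mu s1 t1 s2 t2 - nu s1 t1 s2 t2) <= KL4 mu nu.
  by apply: ler_sum4 => s1 t1 s2 t2; apply: klterm_ge_subr.
by rewrite sum4B /sum4 mu1 nu1 subrr.
Qed.

Lemma KL4xx (mu : dist4 R) : KL4 mu mu = 0.
Proof. by do 4!(apply: big1 => ? _); apply: kltermxx. Qed.

End SumsOverSpins.

Lemma sum4_coupling_additive {R : realType} (alpha : R) (mu : dist4 R) (h : bool -> bool -> R) :
  coupling alpha mu ->
  sum4 (fun s1 t1 s2 t2 => mu s1 t1 s2 t2 * (h s1 t1 + h s2 t2))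
  = 2 * \sum_(s : bool) \sum_(t : bool) rho alpha s t * h s t.
Proof.
move=> [_ [marg1 marg2]].
transitivity (\sum_(s : bool) \sum_(t : bool)
    (\sum_(s2 : bool) \sum_(t2 : bool) mu s t s2 t2) * h s t
  + \sum_(s : bool) \sum_(t : bool)
    (\sum_(s1 : bool) \sum_(t1 : bool) mu s1 t1 s t) * h s t).
  by rewrite /sum4 !big_bool /=; ring.
under eq_bigr do under eq_bigr do rewrite marg1.
under [X in _ + X]eq_bigr do under eq_bigr do rewrite marg2.
by ring.
Qed.

Definition agree (s1 t1 s2 t2 : bool) : nat := (s1 == s2) + (t1 == t2).

Lemma gfunE {R : realType} (beta alpha : R) (mu : dist4 R) :
  gfun beta alpha mu = sum4 (fun s1 t1 s2 t2 =>
    klterm (mu s1 t1 s2 t2) (rho2 alpha s1 t1 s2 t2)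
    + beta * (agree s1 t1 s2 t2)%:R * mu s1 t1 s2 t2).
Proof. by rewrite /gfun /KL4 /klterm /sum4 /agree !big_bool /=; ring. Qed.

Lemma ln_sqrt {R : realType} (x : R) : 0 < x -> ln (Num.sqrt x) = ln x / 2.
Proof.
move=> x_gt0; rewrite -{2}(sqr_sqrtr (ltW x_gt0)) lnXn ?sqrtr_gt0 // -mulr_natr.
by field.
Qed.

Lemma rho_gt0 {R : realType} (alpha : R) s t :
  -1 < alpha -> alpha < 1 -> 0 < rho alpha s t.
Proof. by rewrite /rho; case: eqP => _; lra. Qed.

Section Minimizer.
Variables (R : realType) (beta alpha : R).
Hypotheses (beta_gt0 : 0 < beta) (alpha_gtN1 : -1 < alpha) (alpha_lt1 : alpha < 1).

Local Notation E := (expR (- beta)).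
Local Notation u := (1 + E ^+ 2).
Local Notation v := (2 * E).
Local Notation w := (1 - E ^+ 2).
Local Notation p := (aligned_weight u v w alpha).
Local Notation q := (antialigned_weight u v w alpha).

Let E_gt0 : 0 < E. Proof. exact: expR_gt0. Qed.
Let E_lt1 : E < 1. Proof. by rewrite expR_lt1 oppr_lt0. Qed.
Let u_gt0 : 0 < u. Proof. by rewrite addr_gt0 ?exprn_gt0. Qed.
Let v_gt0 : 0 < v. Proof. by rewrite mulr_gt0. Qed.
Let w_gt0 : 0 < w. Proof. by rewrite subr_gt0 expr2; move: E_gt0 E_lt1; nra. Qed.
Let pythag : u ^+ 2 = v ^+ 2 + w ^+ 2. Proof. by ring. Qed.

Definition spin_weight (s t : bool) : R := if s == t then p else q.

Definition mustar : dist4 R := fun s1 t1 s2 t2 =>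
  spin_weight s1 t1 * spin_weight s2 t2 * E ^+ agree s1 t1 s2 t2.

Definition spin_potential (s t : bool) : R := ln (spin_weight s t / rho alpha s t).

Lemma spin_weight_gt0 s t : 0 < spin_weight s t.
Proof. by rewrite /spin_weight; case: eqP => _; [apply: pw_gt0 | apply: qw_gt0]. Qed.

Lemma mustar_gt0 s1 t1 s2 t2 : 0 < mustar s1 t1 s2 t2.
Proof. by rewrite !mulr_gt0 ?spin_weight_gt0 ?exprn_gt0. Qed.

Lemma mustar_coupling : coupling alpha mustar.
Proof.
have pm := pw_marginal u_gt0 v_gt0 w_gt0 pythag alpha_gtN1 alpha_lt1.
have qm := qw_marginal u_gt0 v_gt0 w_gt0 pythag alpha_gtN1 alpha_lt1.
have marg1 s1 t1 : \sum_(s2 : bool) \sum_(t2 : bool) mustar s1 t1 s2 t2 = rho alpha s1 t1.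
  by case: s1; case: t1; rewrite /mustar /agree /spin_weight /rho !big_bool /=;
    [rewrite -pm | rewrite -qm | rewrite -qm | rewrite -pm]; ring.
have marg2 s2 t2 : \sum_(s1 : bool) \sum_(t1 : bool) mustar s1 t1 s2 t2 = rho alpha s2 t2.
  by case: s2; case: t2; rewrite /mustar /agree /spin_weight /rho !big_bool /=;
    [rewrite -pm | rewrite -qm | rewrite -qm | rewrite -pm]; ring.
split; last by split.
split=> [s1 t1 s2 t2|]; first exact/ltW/mustar_gt0.
under eq_bigr do under eq_bigr do rewrite marg1.
by rewrite !big_bool /rho /=; field.
Qed.

Lemma ln_mustar_div_rho2 s1 t1 s2 t2 :
  ln (mustar s1 t1 s2 t2 / rho2 alpha s1 t1 s2 t2)
  = spin_potential s1 t1 + spin_potential s2 t2 - beta * (agree s1 t1 s2 t2)%:R.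
Proof.
have pos_sw s t : spin_weight s t / rho alpha s t \is Num.pos.
  by rewrite posrE divr_gt0 ?spin_weight_gt0 ?rho_gt0.
have -> : mustar s1 t1 s2 t2 / rho2 alpha s1 t1 s2 t2
    = spin_weight s1 t1 / rho alpha s1 t1 * (spin_weight s2 t2 / rho alpha s2 t2)
      * E ^+ agree s1 t1 s2 t2.
  by rewrite /mustar /rho2; field; rewrite !gt_eqF ?rho_gt0.
rewrite lnM ?(rpredM (pos_sw _ _) (pos_sw _ _)) ?posrE ?exprn_gt0 //.
rewrite lnM // lnXn // expRK mulr_natr mulNrn.
by rewrite /spin_potential.
Qed.

Lemma gfun_coupling (mu : dist4 R) : coupling alpha mu ->
  gfun beta alpha mu = KL4 mu mustar
    + 2 * \sum_(s : bool) \sum_(t : bool) rho alpha s t * spin_potential s t.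
Proof.
move=> mu_coupl; have [[mu_ge0 _] _] := mu_coupl.
rewrite gfunE -(sum4_coupling_additive _ mu_coupl) -sum4D.
apply: eq_sum4 => s1 t1 s2 t2.
have rho2_gt0 : 0 < rho2 alpha s1 t1 s2 t2 by rewrite mulr_gt0 ?rho_gt0.
rewrite (klterm_change_ref (mu_ge0 _ _ _ _) rho2_gt0 (mustar_gt0 s1 t1 s2 t2)).
by rewrite ln_mustar_div_rho2 /klterm; ring.
Qed.

Lemma potential_value :
  2 * \sum_(s : bool) \sum_(t : bool) rho alpha s t * spin_potential s t = gvalue beta alpha.
Proof.
have Xp_gt0 := Xp_gt0 u_gt0 v_gt0 w_gt0 pythag alpha_gtN1 alpha_lt1.
have Xm_gt0 := Xm_gt0 u_gt0 v_gt0 w_gt0 pythag alpha_gtN1 alpha_lt1.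
have uw2_gt0 : 0 < u * w ^+ 2 by rewrite mulr_gt0 ?exprn_gt0.
have ln4 : ln (4 : R) = 2 * ln 2.
  by rewrite (_ : 4 = 2 ^+ 2) ?lnXn ?mulr2n //; ring.
have ln_weight X : 0 < X -> ln (Num.sqrt (X / (4 * u * w ^+ 2)))
    = (ln X - 2 * ln 2 - ln (u * w ^+ 2)) / 2.
  move=> X_gt0; rewrite ln_sqrt ?divr_gt0 -?mulrA ?mulr_gt0 //.
  by rewrite ln_div ?posrE ?mulr_gt0 // lnM ?posrE // ln4; ring.
have -> : gvalue beta alpha = 2 * ln 2 - ln (u * w ^+ 2)
    - (1 + alpha) * ln (1 + alpha) - (1 - alpha) * ln (1 - alpha)
    + (1 + alpha) / 2 * ln (Xp u v w alpha) + (1 - alpha) / 2 * ln (Xm u v w alpha).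
  by rewrite /gvalue (_ : expR (- (2 * beta)) = E ^+ 2) // expr2 -expRD; congr expR; ring.
have a_plus_gt0 : 0 < 1 + alpha by move: alpha_gtN1; lra.
have a_minus_gt0 : 0 < 1 - alpha by move: alpha_lt1; lra.
rewrite !big_bool /spin_potential /spin_weight /rho /=.
rewrite !ln_div ?posrE ?divr_gt0 ?pw_gt0 ?qw_gt0 // /aligned_weight /antialigned_weight !ln_weight // ln4.
by field.
Qed.

End Minimizer.

Theorem lemma8p2 (R : realType) (beta alpha : R) :
  0 < beta -> -1 < alpha -> alpha < 1 ->
  exists mustar : dist4 R,
    [/\ coupling alpha mustar,
        (forall mu : dist4 R, coupling alpha mu -> gfun beta alpha mustar <= gfun beta alpha mu)
      & gfun beta alpha mustar = gvalue beta alpha].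
Proof.
move=> beta_gt0 alpha_gtN1 alpha_lt1.
have mustar_coupl := mustar_coupling beta_gt0 alpha_gtN1 alpha_lt1.
have gfun_mustar := gfun_coupling beta_gt0 alpha_gtN1 alpha_lt1 mustar_coupl.
rewrite KL4xx add0r in gfun_mustar.
exists (mustar beta alpha); split => //.
- move=> mu mu_coupl.
  rewrite gfun_mustar (gfun_coupling beta_gt0 alpha_gtN1 alpha_lt1 mu_coupl) lerDr.
  apply: KL4_ge0; [by case: mu_coupl | by case: mustar_coupl | exact: mustar_gt0].
- by rewrite gfun_mustar potential_value.
Qed.
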